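(* Let $\mathsf{M}=(E,\mathcal{L})$ be a loopless matroid. For any subset $S\subseteq E$, with $\rho_S:A^*(\mathsf{M}|_S)\to A^*(\mathsf{M})$ the homomorphism defined by $\rho_S(D_G)=\sum_{G'\in\mathcal{L}^*,\ G\subseteq G'\subseteq G\cup(E\setminus S)}D_{G'}$, we have \[ \rho_S(\psi_0)=\psi_0-\sum_{G\in\mathcal{L}^*,\ G\subseteq E\setminus S} D_{G}\qquad\text{and}\qquad\rho_S(\psi_\infty)=\psi_\infty-\sum_{G\in\mathcal{L}^*,\ G\supseteq S} D_{G}, \] where on the left $\psi_0,\psi_\infty$ are the classes of $\mathsf{M}|_S$ and on the right those of $\mathsf{M}$. In particular, if $F\in\mathcal{L}^*$ is a proper flat, then \[ \psi_F^-=\rho_F(\psi_\infty)\qquad\text{and}\qquad\psi_F^+=\rho_{E\setminus F}(\psi_0). \]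
   Context: A matroid $\mathsf{M}=(E,\mathcal{L})$ consists of a finite ground set $E$ and a collection $\mathcal{L}\subseteq 2^E$ of flats such that (1) the intersection of two flats is a flat, and (2) for every flat $F$, every element of $E\setminus F$ lies in exactly one flat minimal among flats strictly containing $F$. It is loopless if $\emptyset\in\mathcal{L}$. Write $\mathcal{L}^*=\mathcal{L}\setminus\{\emptyset,E\}$. The restriction $\mathsf{M}|_S$ is the matroid on ground set $S$ with flats $\{F\cap S\mid F\in\mathcal{L}\}$. For a loopless matroid $\mathsf{N}=(E',\mathcal{L}')$, the Chow ring is $A^*(\mathsf{N})=\mathbb{Z}[X_F\mid F\in\mathcal{L}'^*]/(\mathcal{I}+\mathcal{J})$, where $\mathcal{L}'^*=\mathcal{L}'\setminus\{\emptyset,E'\}$, $\mathcal{I}$ is generated by $X_{F_1}X_{F_2}$ for incomparable $F_1,F_2$, and $\mathcal{J}$ by $\sum_{F\in\mathcal{L}'^*,\,e\in F}X_F-\sum_{F\in\mathcal{L}'^*,\,f\in F}X_F$ for $e,f\in E'$; $D_F$ is the class of $X_F$. The map $\rho_S$ is a well-defined ring homomorphism. For any flat $F\in\mathcal{L}'$ and any $e\in E'$, $\psi_F^-=\sum_{G\in\mathcal{L}'^*,\ e\in G}D_G-\sum_{G\in\mathcal{L}'^*,\ G\supseteq F}D_G$ and $\psi_F^+=\sum_{G\in\mathcal{L}'^*,\ e\notin G}D_G-\sum_{G\in\mathcal{L}'^*,\ G\subseteq F}D_G$ (independent of $e$); $\psi_0=\psi_\emptyset^+=\sum_{G\in\mathcal{L}'^*,\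 e\notin G}D_G$ and $\psi_\infty=\psi_{E'}^-=\sum_{G\in\mathcal{L}'^*,\ e\in G}D_G$. *)

From HB Require Import structures.
From mathcomp Require Import all_boot all_order all_algebra.
From mathcomp Require Import mpoly.
Unset Printing Implicit Defensive.
Import Order.TTheory GRing.Theory Num.Theory.
Local Open Scope ring_scope.

Section Matroids.
Variable T : finType.

(* A matroid on ground set E (a subset of the finite type T) given by its
   collection of flats L. *)
Definition cover (L : {set {set T}}) (F G : {set T}) : bool :=
  [&& G \in L, F \proper G &
      [forall H in L, ~~ ((F \proper H) && (H \proper G))]].

Definition is_matroid (E : {set T}) (L : {set {set T}}) : Prop :=
  [/\ forall F, F \in L -> F \subset E,
      forall F1 F2, F1 \in L -> F2 \in L -> F1 :&: F2 \in L &
      forall F, F \in L -> forall x, x \in E :\: F ->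
        #|[set G | cover L F G && (x \in G)]| = 1%N].

Definition loopless (L : {set {set T}}) : Prop := set0 \in L.

Definition restr_flats (L : {set {set T}}) (S : {set T}) : {set {set T}} :=
  [set F :&: S | F in L].

Definition Lstar (E : {set T}) (L : {set {set T}}) : {set {set T}} :=
  L :\: [set set0; E].

(* number of generators of the Chow ring; generator i corresponds to flat fl E L i *)
Definition nv (E : {set T}) (L : {set {set T}}) : nat := #|Lstar E L|.

Definition fl (E : {set T}) (L : {set {set T}}) (i : 'I_(nv E L)) : {set T} :=
  @enum_val _ (mem (Lstar E L)) i.

(* The polynomial ring Z[X_F | F in L^*] is {mpoly int[nv E L]}, X_{fl E L i} = 'X_i. *)
Notation PR E L := {mpoly int[nv E L]}.

Definition linJ (E : {set T}) (L : {set {set T}}) (e : T) : PR E L :=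
  \sum_(i < nv E L | e \in fl E L i) 'X_i.

Definition in_chow_ideal (E : {set T}) (L : {set {set T}}) (p : PR E L) : Prop :=
  exists (a : 'I_(nv E L) -> 'I_(nv E L) -> PR E L) (b : T -> T -> PR E L),
    p = \sum_(i < nv E L) \sum_(j < nv E L |
              ~~ (fl E L i \subset fl E L j) && ~~ (fl E L j \subset fl E L i))
            a i j * ('X_i * 'X_j)
        + \sum_(e in E) \sum_(f in E) b e f * (linJ E L e - linJ E L f).

Definition chow_eq (E : {set T}) (L : {set {set T}}) (p q : PR E L) : Prop :=
  in_chow_ideal E L (p - q).

(* polynomial representatives of psi_0, psi_infty, psi_F^-, psi_F^+ *)
Definition psi0 (E : {set T}) (L : {set {set T}}) (e : T) : PR E L :=
  \sum_(i < nv E L | e \notin fl E L i) 'X_i.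
Definition psiinf (E : {set T}) (L : {set {set T}}) (e : T) : PR E L :=
  \sum_(i < nv E L | e \in fl E L i) 'X_i.
Definition psiminus (E : {set T}) (L : {set {set T}}) (F : {set T}) (e : T) : PR E L :=
  psiinf E L e - \sum_(i < nv E L | F \subset fl E L i) 'X_i.
Definition psiplus (E : {set T}) (L : {set {set T}}) (F : {set T}) (e : T) : PR E L :=
  psi0 E L e - \sum_(i < nv E L | fl E L i \subset F) 'X_i.

Definition rho_img (E : {set T}) (L : {set {set T}}) (S : {set T})
    (i : 'I_(nv S (restr_flats L S))) : PR E L :=
  \sum_(j < nv E L | (fl S (restr_flats L S) i \subset fl E L j) && (fl E L j \subset fl S (restr_flats L S) i :|: (E :\: S))) 'X_j.

Definition rho (E : {set T}) (L : {set {set T}}) (S : {set T})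
    (p : PR S (restr_flats L S)) : PR E L :=
  comp_mpoly [tuple rho_img E L S i | i < nv S (restr_flats L S)] p.

End Matroids.

Arguments cover {T}. Arguments is_matroid {T}. Arguments loopless {T}.
Arguments restr_flats {T}. Arguments Lstar {T}. Arguments nv {T}.
Arguments fl {T E L}. Arguments linJ {T}. Arguments in_chow_ideal {T}.
Arguments chow_eq {T}. Arguments psi0 {T}. Arguments psiinf {T}.
Arguments psiminus {T}. Arguments psiplus {T}. Arguments rho_img {T}.
Arguments rho {T}.

From HB Require Import structures.
From mathcomp Require Import all_boot all_order all_algebra.
From mathcomp Require Import mpoly.
From mathcomp Require Import ring.
Import GRing.Theory.
Local Open Scope ring_scope.

(* Since [G <= G' <= G :|: (E :\: S)] means [G = G' :&: S] for a flat [G'] of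
   [M], the lift of [rho_S] sends a sum of generators [X_G] of [M|_S] over
   the [G] satisfying a predicate to the sum of the [X_G'] over the flats
   [G'] of [M] whose trace [G' :&: S] is a proper nonempty flat of [M|_S]
   satisfying that predicate.  For [psi_0] and [psi_infty] these traces are
   read off directly, and what remains is a difference [linJ e - linJ f] of
   linear relations. *)

Section ChowIdeal.
Variables (T : finType) (E : {set T}) (L : {set {set T}}).

Lemma in_chow_ideal_linJB (e f : T) :
  e \in E -> f \in E -> in_chow_ideal E L (linJ E L e - linJ E L f).
Proof.
move=> eE fE.
exists (fun _ _ => 0), (fun x y => if (x == e) && (y == f) then 1 else 0).
rewrite big1 ?add0r; last by move=> i _; rewrite big1 // => j _; rewrite mul0r.
rewrite (bigD1 e) //= (bigD1 f) //= !eqxx mul1r !big1 ?addr0 //.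
  by move=> x /andP[_ /negbTE xe]; rewrite big1 // => y _; rewrite xe mul0r.
by move=> y /andP[_ /negbTE ->]; rewrite andbF mul0r.
Qed.

Lemma chow_eq_linJB (p q : {mpoly int[nv E L]}) (e f : T) :
  e \in E -> f \in E -> p - q = linJ E L e - linJ E L f -> chow_eq E L p q.
Proof. by move=> eE fE pqE; rewrite /chow_eq pqE; apply: in_chow_ideal_linJB. Qed.

Lemma psi0E (e : T) : psi0 E L e = \sum_i 'X_i - linJ E L e.
Proof.
by rewrite [\sum_i _](bigID (fun i => e \in fl i)) /= /linJ /psi0 addrC addrK.
Qed.

Lemma psiinfE (e : T) : psiinf E L e = linJ E L e.
Proof. by []. Qed.

End ChowIdeal.

Arguments chow_eq_linJB {T E L p q e f}.

Section Restriction.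
Variables (T : finType) (E : {set T}) (L : {set {set T}}).
Hypothesis flats_sub : forall F, F \in L -> F \subset E.

Lemma fl_in_flats (j : 'I_(nv E L)) : fl j \in L.
Proof. by have := enum_valP j; rewrite inE => /andP[]. Qed.

Lemma fl_sub (j : 'I_(nv E L)) : fl j \subset E.
Proof. exact/flats_sub/fl_in_flats. Qed.

Lemma Lstar_restr_sub (S G : {set T}) :
  G \in Lstar S (restr_flats L S) -> G \subset S.
Proof. by rewrite inE => /andP[_ /imsetP[F _ ->]]; apply: subsetIr. Qed.

Lemma setI_in_Lstar_restr (S : {set T}) (j : 'I_(nv E L)) :
  (fl j :&: S \in Lstar S (restr_flats L S)) =
  (fl j :&: S != set0) && ~~ (S \subset fl j).
Proof.
by rewrite !inE (imset_f (fun F => F :&: S) (fl_in_flats j)) andbT negb_or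
           (eqEsubset _ S) subsetIr subsetIidr.
Qed.

Lemma between_eq_setI (S G F : {set T}) :
  G \subset S -> F \subset E ->
  (G \subset F) && (F \subset G :|: E :\: S) = (G == F :&: S).
Proof.
move=> /subsetP GS /subsetP FE; apply/idP/eqP.
  case/andP=> /subsetP GF /subsetP FG; apply/setP => x; rewrite inE.
  apply/idP/andP=> [xG | [xF xS]]; first by split; [apply: GF | apply: GS].
  by move: (FG x xF); rewrite !inE xS /= orbF.
move=> ->; rewrite subsetIl; apply/subsetP => x xF.
by rewrite !inE xF FE // andbT; case: (x \in S).
Qed.

Lemma rho_sumX (S : {set T}) (P : pred {set T}) :
  rho E L S (\sum_(i < nv S (restr_flats L S) | P (fl i)) 'X_i) =
  \sum_(j < nv E L | (fl j :&: S \in Lstar S (restr_flats L S))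
                      && P (fl j :&: S)) 'X_j.
Proof.
set R := restr_flats L S.
rewrite /rho raddf_sum /=.
under eq_bigr => i _ do rewrite comp_mpolyXU -tnth_nth tnth_mktuple /rho_img.
transitivity (\sum_(G in Lstar S R | P G)
    \sum_(j < nv E L | (G \subset fl j) && (fl j \subset G :|: E :\: S))
      ('X_j : {mpoly int[nv E L]})).
  by rewrite big_enum_val_cond.
rewrite (exchange_big_dep xpredT) //= [RHS]big_mkcond /=.
apply: eq_bigr => j _.
have trace_eq G : G \in Lstar S R ->
    (G \subset fl j) && (fl j \subset G :|: E :\: S) = (G == fl j :&: S).
  by move=> GR; rewrite between_eq_setI ?fl_sub //; apply: Lstar_restr_sub GR.
case: ifP => [trR | trNR].
  rewrite (big_pred1 (fl j :&: S)) // => G /=.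
  case GR: (G \in Lstar S R) => /=; last first.
    by apply/esym/eqP => GE; move: trR; rewrite -GE GR.
  by rewrite trace_eq //; case: eqP => [->|]; rewrite ?andbF // (andP trR).2.
rewrite big_pred0 // => G /=.
case GR: (G \in Lstar S R) => //=; rewrite trace_eq //.
by case: eqP => [GE|]; rewrite ?andbF // andbT; move: trNR; rewrite -GE GR.
Qed.

Lemma rho_psi0 (S : {set T}) (e : T) : e \in S ->
  rho E L S (psi0 S (restr_flats L S) e) =
  psi0 E L e - \sum_(i < nv E L | fl i \subset E :\: S) 'X_i.
Proof.
move=> eS; rewrite /psi0 (rho_sumX S (fun G => e \notin G)).
rewrite [\sum_(i < nv E L | e \notin fl i) _](bigID (fun i => fl i :&: S == set0)).
have trace0 (i : 'I_(nv E L)) :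
    (e \notin fl i) && (fl i :&: S == set0) = (fl i \subset E :\: S).
  rewrite subsetD fl_sub -setI_eq0.
  case: eqP => [trS0 | _]; last by rewrite andbF.
  by rewrite andbT; apply/negP => efl; have := in_set0 e; rewrite -trS0 inE efl eS.
rewrite /= (eq_bigl _ _ trace0) addrAC subrr add0r; apply: eq_bigl => j.
rewrite setI_in_Lstar_restr inE eS andbT andbC.
case efl: (e \in fl j) => //=.
suff -> : ~~ (S \subset fl j) by rewrite andbT.
by apply/subsetPn; exists e; rewrite ?efl.
Qed.

Lemma rho_psiinf (S : {set T}) (e : T) : e \in S ->
  rho E L S (psiinf S (restr_flats L S) e) =
  psiinf E L e - \sum_(i < nv E L | S \subset fl i) 'X_i.
Proof.
move=> eS; rewrite /psiinf (rho_sumX S (fun G => e \in G)).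
rewrite [\sum_(i < nv E L | e \in fl i) _](bigID (fun i => S \subset fl i)).
have traceS (i : 'I_(nv E L)) :
    (e \in fl i) && (S \subset fl i) = (S \subset fl i).
  by apply/andP/idP => [[] | Sfl] //; split=> //; apply: (subsetP Sfl).
rewrite /= (eq_bigl _ _ traceS) addrAC subrr add0r; apply: eq_bigl => j.
rewrite setI_in_Lstar_restr inE eS andbT andbC.
case efl: (e \in fl j) => //=.
suff -> : fl j :&: S != set0 by [].
by apply/set0Pn; exists e; rewrite inE efl eS.
Qed.

End Restriction.

Theorem proposition3p7 (T : finType) (E : {set T}) (L : {set {set T}}) :
  is_matroid E L -> loopless L ->
  (forall S : {set T}, S \subset E -> S != set0 ->
     (forall e f, e \in S -> f \in E ->
        chow_eq E L (rho E L S (psi0 S (restr_flats L S) e))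
                    (psi0 E L f - \sum_(i < nv E L | fl i \subset E :\: S) 'X_i))
     /\
     (forall e f, e \in S -> f \in E ->
        chow_eq E L (rho E L S (psiinf S (restr_flats L S) e))
                    (psiinf E L f - \sum_(i < nv E L | S \subset fl i) 'X_i)))
  /\
  (forall F : {set T}, F \in Lstar E L ->
     (forall e f, e \in F -> f \in E ->
        chow_eq E L (psiminus E L F f) (rho E L F (psiinf F (restr_flats L F) e)))
     /\
     (forall e f, e \in E :\: F -> f \in E ->
        chow_eq E L (psiplus E L F f)
                    (rho E L (E :\: F) (psi0 (E :\: F) (restr_flats L (E :\: F)) e)))).
Proof.
move=> [flats_sub _ _] _; split.
  move=> S SE _; split=> e f eS fE; have eE := subsetP SE e eS.
    by apply: (chow_eq_linJB fE eE); rewrite rho_psi0 // !psi0E; ring.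
  by apply: (chow_eq_linJB eE fE); rewrite rho_psiinf // !psiinfE; ring.
move=> F FL; have FE : F \subset E.
  by apply: flats_sub; move: FL; rewrite inE => /andP[].
have EDDF : E :\: (E :\: F) = F by rewrite setDDr setDv set0U; apply/setIidPr.
split=> e f eF fE.
  apply: (chow_eq_linJB fE (subsetP FE e eF)).
  by rewrite rho_psiinf // /psiminus !psiinfE; ring.
have eE : e \in E by move: eF; rewrite inE => /andP[].
apply: (chow_eq_linJB eE fE).
by rewrite rho_psi0 // /psiplus EDDF !psi0E; ring.
Qed.
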